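(* Suppose $E,F\subset\mathcal{T}$ are disjoint stopping times with $F\succ E$. Then: (1) There is a function $h$ on $\mathcal{T}$, admissible for $Cap_{\mathcal{T}}(E,F)$, with $Cap_{\mathcal{T}}(E,F)=\|h\|_{\ell^2}^2$. Put $H=Ih$. (2) $H$ is harmonic on $\mathcal{T}\setminus(E\cup F)$. (3) If $S$ is any stopping time in $\mathcal{T}$, then $\sum_{\kappa\in S}|h(\kappa)|\le2\,Cap_{\mathcal{T}}(E,F)$. (4) $h$ is positive on $\mathcal{G}(E,F)$ and zero elsewhere.
   Context: Tree. $\mathcal{T}$ is the rooted dyadic tree with root $o$ (vertices are the dyadic arcs of the unit circle, each vertex $x$ having two children $x_+,x_-$ and, if $x\ne o$, a parent $x^{-1}$). Write $y\le x$ if $x$ lies in the subtree rooted at $y$, and $y<x$ if moreover $y\ne x$. $[o,x]=\{y:y\le x\}$ and $S(x)=\{y:y\ge x\}$. A stopping time is a set of pairwise incomparable vertices. For stopping times $E,F$, write $F\succ E$ if every $x\in F$ has some $y\in E$ with $y<x$. $\mathcal{G}(E,F)$ is the union of all geodesics $[y,x]=\{z:y\le z\le x\}$ with $x\in F$ and $y\in E$, $y<x$. Capacity. For $f:\mathcal{T}\to\mathbb{R}$ put $If(x)=\sum_{y\in[o,x]}f(y)$. The condenser capacity is $Cap_{\mathcal{T}}(E,F)=\inf\{\|f\|^2_{\ell^2(\mathcal{T})}:If\ge1\text{ on }F,\ \operatorname{supp}f\subset\bigcup_{e\in E}S(e)\}$. Functions satisfying these two constraints are called admissible. Harmonicity.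 For $\Omega\subset\mathcal{T}$, a vertex $x$ is interior to $\Omega$ if $x,x^{-1},x_+,x_-\in\Omega$. A function $H$ is harmonic in $\Omega$ if $H(x)=\frac13[H(x^{-1})+H(x_+)+H(x_-)]$ for every interior point $x$ of $\Omega$. *)

From HB Require Import structures.
From mathcomp Require Import all_boot all_order all_algebra.
From mathcomp Require Import all_classical all_reals.
From mathcomp Require Import ereal esum.
Set Implicit Arguments. Unset Strict Implicit. Unset Printing Implicit Defensive.
Import Order.TTheory GRing.Theory Num.Theory.
Local Open Scope classical_set_scope.
Local Open Scope ring_scope.

(* The rooted dyadic tree: a vertex is the sequence of left/right choices
   from the root, MOST RECENT CHOICE FIRST. *)
Definition vtx := seq bool.
Definition root : vtx := [::].
Definition child_p (x : vtx) : vtx := true :: x.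
Definition child_m (x : vtx) : vtx := false :: x.
Definition parent (x : vtx) : vtx := behead x.

(* y <= x : x lies in the subtree rooted at y (y is an ancestor-or-self of x) *)
Definition tle (y x : vtx) : bool := suffix y x.
Definition tlt (y x : vtx) : bool := tle y x && (y != x).

Definition stopping_time (S : set vtx) : Prop :=
  forall x y, S x -> S y -> x != y -> ~~ tle x y /\ ~~ tle y x.

Definition succ_st (F E : set vtx) : Prop :=
  forall x, F x -> exists y, E y /\ tlt y x.

Definition geod_union (E F : set vtx) : set vtx :=
  [set z | exists x y, [/\ F x, E y, tlt y x, tle y z & tle z x]].

(* If(x) = sum over y in [o,x] of f y; the ancestors of x are the drop i x *)
Definition Iop {R : realType} (f : vtx -> R) (x : vtx) : R :=
  \sum_(i < (size x).+1) f (drop i x).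

Definition l2norm2 {R : realType} (f : vtx -> R) : \bar R :=
  \esum_(x in [set: vtx]) ((f x ^+ 2)%:E).

Definition admissible {R : realType} (E F : set vtx) (f : vtx -> R) : Prop :=
  (forall x, F x -> 1 <= Iop f x) /\
  (forall x, f x != 0 -> exists e, E e /\ tle e x).

Definition Cap {R : realType} (E F : set vtx) : \bar R :=
  ereal_inf [set l2norm2 f | f in [set f : vtx -> R | admissible E F f]].

Definition interior_pt (Om : set vtx) (x : vtx) : Prop :=
  x != root /\ Om x /\ Om (parent x) /\ Om (child_p x) /\ Om (child_m x).

Definition harmonic_in {R : realType} (Om : set vtx) (H : vtx -> R) : Prop :=
  forall x, interior_pt Om x ->
    H x = (H (parent x) + H (child_p x) + H (child_m x)) / 3.

(* When Cap(E,F) is finite it is attained: by the parallelogram law a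
   minimizing sequence is pointwise Cauchy, and its pointwise limit h is the
   unique minimizer.  Each property of h comes from a competitor that cannot
   have smaller energy: |h| and the truncation of Ih at 1 give h >= 0 and
   Ih <= 1; shifting mass between the three edges at x gives Kirchhoff's law
   h(x) = h(x_+) + h(x_-), i.e. the harmonicity of Ih; cutting off the subtree
   at a vertex outside G(E,F) shows that h vanishes there; (1+t)h - t 1_S
   bounds the flow through a stopping time S by the energy; and Kirchhoff's
   law together with Ih = 1 on F excludes zeros of h on G(E,F).
   When Cap(E,F) = +oo every admissible function has infinite energy, and the
   minimizers of the finite problems Cap({e}, F \cap S(e)), e in E, glue into
   an h with all the other properties. *)

From HB Require Import structures.
From mathcomp Require Import all_boot all_order all_algebra.
From mathcomp Require Import all_classical all_reals.
From mathcomp Require Import ereal esum topology normedtype.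
From mathcomp Require Import ring lra.
Import Order.TTheory GRing.Theory Num.Theory.
Import numFieldNormedType.Exports.
Local Open Scope classical_set_scope.
Local Open Scope ring_scope.
Set Implicit Arguments. Unset Strict Implicit. Unset Printing Implicit Defensive.

Lemma tle_refl x : tle x x. Proof. exact: suffix_refl. Qed.

Lemma tle_trans y x z : tle x y -> tle y z -> tle x z.
Proof. exact: suffix_trans. Qed.

Lemma tle_drop i x : tle (drop i x) x. Proof. exact: suffix_drop. Qed.

Lemma size_tle x y : tle x y -> (size x <= size y)%N. Proof. exact: size_suffix. Qed.

Lemma tleE y x : tle y x -> y = drop (size x - size y) x.
Proof. by rewrite /tle suffixE => /eqP ->. Qed.

Lemma tle_cons y b x : tle y (b :: x) = (y == b :: x) || tle y x.
Proof.
apply/idP/orP => [/suffixP[[|c s] /= e]|[/eqP ->|]]; first by left; rewrite e.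
- by right; case: e => _ ->; exact: suffix_suffix.
- exact: tle_refl.
- by move/tle_trans; apply; exact: suffix_cons.
Qed.

Lemma tle_child b x : tle x (b :: x). Proof. by rewrite tle_cons tle_refl orbT. Qed.

Lemma tle_consl b x z : tle (b :: x) z -> tle x z.
Proof. exact/tle_trans/tle_child. Qed.

Lemma cons_neq (b : bool) (x : vtx) : b :: x != x.
Proof. by apply/eqP => /(congr1 size) /= /esym /n_Sn. Qed.

Lemma tle_cons_neq b x : ~~ tle (b :: x) x.
Proof. by apply/negP => /size_tle; rewrite /= ltnn. Qed.

Lemma tle_nil x : tle x [::] -> x = [::].
Proof. by rewrite /tle suffixs0 => /eqP. Qed.

Lemma tle_anti x y : tle x y -> tle y x -> x = y.
Proof.
move=> xy yx; rewrite (tleE xy).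
have -> : size y = size x by apply/eqP; rewrite eqn_leq !size_tle.
by rewrite subnn drop0.
Qed.

Lemma tle_total a b z : tle a z -> tle b z -> tle a b || tle b a.
Proof.
move=> /tleE ea /tleE eb; set i := (size z - size a)%N in ea.
set j := (size z - size b)%N in eb; rewrite ea eb.
case: (leqP i j) => hij; apply/orP; [right|left].
  by rewrite -(subnK hij) -drop_drop; exact: tle_drop.
by rewrite -(subnK (ltnW hij)) -drop_drop; exact: tle_drop.
Qed.

Lemma tle_children x z : z != x ->
  tle x z = tle (true :: x) z || tle (false :: x) z.
Proof.
move=> zx; apply/idP/orP => [/suffixP[s es]|[]/tle_consl//].
case/lastP: s es zx => [|s b] -> ; first by rewrite eqxx.
by rewrite cat_rcons => _; case: b; [left|right]; exact: suffix_suffix.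
Qed.

Lemma tle_children_disj x z : ~~ (tle (true :: x) z && tle (false :: x) z).
Proof.
apply/negP => /andP[h1 h2].
by case/orP: (tle_total h1 h2) => /tleE; rewrite /= subnn drop0.
Qed.

Definition subtrees (E : set vtx) : set vtx := [set x | exists e, E e /\ tle e x].

Lemma subtrees_tle E y x : subtrees E y -> tle y x -> subtrees E x.
Proof. by move=> [e [Ee ey]] yx; exists e; split => //; exact: tle_trans yx. Qed.

Lemma subtrees_cons E b x : subtrees E (b :: x) -> E (b :: x) \/ subtrees E x.
Proof.
move=> [e [Ee]]; rewrite tle_cons => /orP[/eqP <-|ex]; first by left.
by right; exists e.
Qed.

Lemma stopping_time_anc_uniq E e1 e2 x : stopping_time E -> E e1 -> E e2 ->
  tle e1 x -> tle e2 x -> e1 = e2.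
Proof.
move=> st E1 E2 h1 h2; apply/eqP; apply: contraT => ne.
have [n1 n2] := st _ _ E1 E2 ne.
by case/orP: (tle_total h1 h2) => hh; [rewrite hh in n1|rewrite hh in n2].
Qed.

Lemma stopping_time_not_subtrees E e p : stopping_time E -> E e ->
  tle p e -> p != e -> ~ subtrees E p.
Proof.
move=> st Ee pe ne [e' [Ee' e'p]]; have e'e := tle_trans e'p pe.
have ne' : e' != e by apply: contraNneq ne => ee; rewrite (tle_anti pe) // -ee.
by have [/negP] := st _ _ Ee' Ee ne'.
Qed.

Lemma stopping_time_set1 e : stopping_time [set e].
Proof. by move=> x y -> -> /eqP. Qed.

Lemma stopping_time_sub S T : stopping_time S -> T `<=` S -> stopping_time T.
Proof. by move=> st TS x y Tx Ty; apply: st; apply: TS. Qed.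

Definition below (F : set vtx) (e : vtx) : set vtx := F `&` [set z | tle e z].

Section Iop.
Variable R : realType.
Implicit Types f g : vtx -> R.

Lemma Iop_nil f : Iop f [::] = f [::].
Proof. by rewrite /Iop big_ord_recl big_ord0 addr0. Qed.

Lemma Iop_cons f b x : Iop f (b :: x) = f (b :: x) + Iop f x.
Proof. by rewrite /Iop big_ord_recl. Qed.

Lemma eq_Iop f g x : (forall y, tle y x -> f y = g y) -> Iop f x = Iop g x.
Proof. by move=> fg; apply: eq_bigr => i _; apply: fg; exact: tle_drop. Qed.

Lemma IopD f g x : Iop (fun y => f y + g y) x = Iop f x + Iop g x.
Proof. exact: big_split. Qed.

Lemma IopZ c f x : Iop (fun y => c * f y) x = c * Iop f x.
Proof. by rewrite /Iop mulr_sumr. Qed.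

Lemma IopN f x : Iop (fun y => - f y) x = - Iop f x.
Proof. exact: sumrN. Qed.

Lemma Iop0 x : Iop (fun=> 0 : R) x = 0.
Proof. exact: big1. Qed.

Lemma ler_Iop f g x : (forall y, f y <= g y) -> Iop f x <= Iop g x.
Proof. by move=> fg; apply: ler_sum => i _. Qed.

Lemma Iop_tle_homo f y x : (forall w, 0 <= f w) -> tle y x -> Iop f y <= Iop f x.
Proof.
move=> f0; elim: x => [/tle_nil ->//|b x IH].
rewrite tle_cons => /orP[/eqP ->//|/IH yx].
by rewrite Iop_cons (le_trans yx) // lerDr.
Qed.

Definition indicator (s : seq vtx) (y : vtx) : R := (y \in s)%:R.

Lemma Iop_indicator1 v z : Iop (indicator [:: v]) z = (tle v z)%:R.
Proof.
elim: z => [|b z IH]; first by rewrite Iop_nil /indicator inE /tle suffixs0 eq_sym.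
rewrite Iop_cons IH tle_cons /indicator inE eq_sym.
have [->|_] := eqVneq v (b :: z); last by rewrite add0r.
by rewrite (negbTE (tle_cons_neq _ _)) addr0.
Qed.

Lemma Iop_indicator_children x z : z != x ->
  Iop (indicator [:: true :: x]) z + Iop (indicator [:: false :: x]) z =
  Iop (indicator [:: x]) z.
Proof.
move=> zx; rewrite !Iop_indicator1 (tle_children zx).
have := tle_children_disj x z.
by case: (tle (true :: x) z); case: (tle (false :: x) z); rewrite ?addr0 ?add0r.
Qed.

Lemma Iop_indicator_le1 (S : set vtx) s z : stopping_time S ->
  (forall y, y \in s -> S y) -> Iop (indicator s) z <= 1.
Proof.
move=> st sS; elim: z => [|b z IH].
  by rewrite Iop_nil /indicator; case: (_ \in _).
rewrite Iop_cons {1}/indicator; have [zs|_] := boolP (b :: z \in s); last first.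
  by rewrite add0r.
suff -> : Iop (indicator s) z = 0 by rewrite addr0.
rewrite -(Iop0 z); apply: eq_Iop => y yz; rewrite /indicator.
have [ys|//] := boolP (y \in s); have [] := st _ _ (sS _ ys) (sS _ zs).
  by apply: contraTneq yz => ->; exact: tle_cons_neq.
by rewrite (tle_trans yz (tle_child _ _)).
Qed.
End Iop.

Section RealFacts.
Variable R : realFieldType.

Lemma le0_of_linear_perturbation (a b : R) :
  (forall t, 0 < t -> a <= t * b) -> a <= 0.
Proof.
move=> ab; rewrite leNgt; apply/negP => a0.
have b1 : 0 < `|b| + 1 by rewrite ltr_pwDr.
have t0 := divr_gt0 a0 b1; have := ab _ t0.
have : a / (`|b| + 1) * b < a / (`|b| + 1) * (`|b| + 1).
  by rewrite ltr_pM2l // (le_lt_trans (ler_norm b)) // ltrDl.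
rewrite divfK ?gt_eqF //; lra.
Qed.

Lemma min1_increment (a t : R) : 0 <= t ->
  0 <= Num.min (a + t) 1 - Num.min a 1 <= t.
Proof.
move=> t0; have [a1|a1] := leP a 1; have [at1|at1] := leP (a + t) 1.
all: rewrite ?(min_l a1) ?(min_r (ltW a1)) ?(min_l at1) ?(min_r (ltW at1)).
all: by apply/andP; split; lra.
Qed.
End RealFacts.

Section Energy.
Variable R : realType.
Implicit Types f g : vtx -> R.

Lemma sqrE_ge0 (a : R) : (0 <= (a ^+ 2)%:E)%E.
Proof. by rewrite lee_fin sqr_ge0. Qed.

Lemma l2norm2_ge0 f : (0 <= l2norm2 f)%E.
Proof. by apply: esum_ge0 => x _; exact: sqrE_ge0. Qed.

Lemma l2norm2_split f s : uniq s ->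
  l2norm2 f = ((\sum_(x <- s) f x ^+ 2)%:E +
               \esum_(x in ~` [set` s]) (f x ^+ 2)%:E)%E.
Proof.
move=> us; rewrite /l2norm2 (esumID [set` s]); last by move=> *; exact: sqrE_ge0.
rewrite setTI esum_fset; [|exact: finite_seq|by move=> *; exact: sqrE_ge0].
by rewrite -fsbig_seq // sumEFin setTI.
Qed.

Lemma sum_sqr_le_l2norm2 f s : uniq s -> ((\sum_(x <- s) f x ^+ 2)%:E <= l2norm2 f)%E.
Proof.
by move=> us; rewrite (l2norm2_split f us) leeDl // esum_ge0 // => *; exact: sqrE_ge0.
Qed.

Lemma sqr_le_l2norm2 f x : ((f x ^+ 2)%:E <= l2norm2 f)%E.
Proof. by have := @sum_sqr_le_l2norm2 f [:: x] isT; rewrite big_seq1. Qed.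

Lemma l2norm2_le_sum_ub f c :
  (forall s, uniq s -> ((\sum_(x <- s) f x ^+ 2)%:E <= c)%E) -> (l2norm2 f <= c)%E.
Proof.
move=> ub; apply: ge_ereal_sup => _ [X [finX _] <-].
by rewrite fsbig_finite // sumEFin; apply: ub; exact: finmap.fset_uniq.
Qed.

Lemma le_l2norm2 f g : (forall x, f x ^+ 2 <= g x ^+ 2) -> (l2norm2 f <= l2norm2 g)%E.
Proof. by move=> fg; apply: le_esum => x _; rewrite lee_fin. Qed.

Lemma l2norm2_update_le f g s (c : R) : uniq s ->
  (forall y, y \notin s -> f y = g y) -> (l2norm2 f <= c%:E)%E ->
  (l2norm2 g <= (c - \sum_(x <- s) f x ^+ 2 + \sum_(x <- s) g x ^+ 2)%:E)%E.
Proof.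
move=> us fg; rewrite !(l2norm2_split _ us).
rewrite (eq_esum (b := fun x => (g x ^+ 2)%:E)); last by move=> y /negP ys; rewrite fg.
have : (0 <= \esum_(x in ~` [set` s]) (g x ^+ 2)%:E)%E.
  by apply: esum_ge0 => *; exact: sqrE_ge0.
case: (\esum_(_ in _) _) => // r; rewrite -!EFinD !lee_fin; lra.
Qed.

Lemma l2norm2_indicator1 e : l2norm2 (indicator R [:: e]) = 1%E.
Proof.
rewrite (l2norm2_split _ (isT : uniq [:: e])) big_seq1 /indicator mem_seq1 eqxx.
rewrite esum1 ?adde0 ?expr1n // => y /= /negP.
by rewrite mem_seq1 => /negbTE ->; rewrite expr0n.
Qed.

Lemma l2norm2_scale (c : R) f :
  (l2norm2 (fun x => (c * f x)%R) <= (c ^+ 2)%:E * l2norm2 f)%E.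
Proof.
apply: l2norm2_le_sum_ub => s us.
have -> : \sum_(x <- s) (c * f x) ^+ 2 = c ^+ 2 * \sum_(x <- s) f x ^+ 2.
  by rewrite mulr_sumr; apply: eq_bigr => i _; rewrite exprMn.
by rewrite EFinM lee_wpmul2l ?sqrE_ge0 ?sum_sqr_le_l2norm2.
Qed.

Lemma l2norm2_parallelogram f g :
  (l2norm2 (fun x => (f x + g x)%R) + l2norm2 (fun x => (f x - g x)%R) =
   l2norm2 f + l2norm2 f + l2norm2 g + l2norm2 g)%E.
Proof.
rewrite /l2norm2 -!esumD; try by move=> *; rewrite ?adde_ge0 ?sqrE_ge0.
by apply: eq_esum => i _; rewrite -!EFinD; congr EFin; ring.
Qed.
End Energy.

Section EnergyLimits.
Variable R : realType.

Lemma exists_natSinv_lt (e : R) : 0 < e -> exists M : nat, M.+1%:R^-1 < e.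
Proof.
move=> e0; exists (Num.truncn e^-1).
by rewrite invf_plt ?posrE // -truncn_lt_nat ?invr_ge0 ?ltW.
Qed.

Lemma ler_natSinv m n : (m <= n)%N -> n.+1%:R^-1 <= m.+1%:R^-1 :> R.
Proof. by move=> mn; rewrite lef_pV2 ?posrE // ler_nat ltnS. Qed.

Lemma cvgn_of_cauchy_bound (u d : nat -> R) :
  (forall M n, (M <= n)%N -> `|u n - u M| <= d M) ->
  (forall e, 0 < e -> exists M, d M < e) -> cvgn u.
Proof.
move=> ud d0; apply: cauchy_cvg; apply/cauchyP => e /d0[M dM].
exists (u M); exists M => // n /= Mn.
by rewrite /ball /= distrC (le_lt_trans (ud M n Mn)).
Qed.

Lemma cvg_sum_sqr (I : Type) (s : seq I) (u : nat -> I -> R) (l : I -> R) :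
  (forall i, u n i @[n --> \oo] --> l i) ->
  \sum_(i <- s) u n i ^+ 2 @[n --> \oo] --> \sum_(i <- s) l i ^+ 2.
Proof.
move=> ul; apply: cvg_big => [|i _]; first exact: add_continuous.
by rewrite expr2; under eq_fun do rewrite expr2; exact: cvgM.
Qed.

Lemma l2norm2_cvg_le (f : nat -> vtx -> R) h (C : R) :
  (forall x, f n x @[n --> \oo] --> h x) ->
  (forall e, 0 < e -> exists M, forall n, (M <= n)%N ->
     (l2norm2 (f n) <= (C + e)%:E)%E) ->
  (l2norm2 h <= C%:E)%E.
Proof.
move=> fh fC; apply: l2norm2_le_sum_ub => s us; rewrite lee_fin.
apply/ler_addgt0Pr => e /fC[M fM].
apply: (cvgr_to_le (cvg_sum_sqr (s := s) fh)); exists M => // n /= Mn.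
by rewrite -lee_fin (le_trans (sum_sqr_le_l2norm2 _ us) (fM n Mn)).
Qed.
End EnergyLimits.

Section CapMinimizer.
Variables (R : realType) (E F : set vtx).
Implicit Types f g h : vtx -> R.

Definition cap_minimizer h :=
  [/\ admissible E F h, Cap E F = l2norm2 h & (l2norm2 h < +oo)%E].

Lemma Cap_le_l2norm2 f : admissible E F f -> (Cap E F <= l2norm2 f)%E.
Proof. by move=> fa; apply: ereal_inf_lbound; exists f. Qed.

Lemma Cap_ge0 : (0 <= Cap E F :> \bar R)%E.
Proof. by apply/ereal_infP => _ [f _ <-]; exact: l2norm2_ge0. Qed.

Lemma admissible_midpoint f g : admissible E F f -> admissible E F g ->
  admissible E F (fun x => 2^-1 * (f x + g x)).
Proof.
move=> [f1 f2] [g1 g2]; split => [z Fz|x].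
  by rewrite IopZ IopD; have := f1 z Fz; have := g1 z Fz; lra.
have [->|/f2//] := eqVneq (f x) 0.
by rewrite add0r mulf_eq0 negb_or => /andP[_ /g2].
Qed.

Lemma admissible_close (C a b : R) f g x : Cap E F = C%:E ->
  admissible E F f -> admissible E F g ->
  (l2norm2 f <= (C + a)%:E)%E -> (l2norm2 g <= (C + b)%:E)%E ->
  (f x - g x) ^+ 2 <= 2 * (a + b).
Proof.
move=> capC fa ga fle gle.
have [p ef] : exists p, l2norm2 f = p%:E.
  by move: (l2norm2_ge0 f) fle; case: (l2norm2 f) => // p; exists p.
have [q eg] : exists q, l2norm2 g = q%:E.
  by move: (l2norm2_ge0 g) gle; case: (l2norm2 g) => // q; exists q.
have := l2norm2_parallelogram f g; rewrite ef eg -!EFinD.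
move: (l2norm2_ge0 (fun x => f x + g x)) (l2norm2_ge0 (fun x => f x - g x)).
case eu: (l2norm2 _) => [u| |] //; case ev: (l2norm2 _) => [v| |] // _ _ [uv].
have mid := le_trans (Cap_le_l2norm2 (admissible_midpoint fa ga))
                     (l2norm2_scale _ (fun x => f x + g x)).
rewrite capC eu -EFinM lee_fin in mid.
have := sqr_le_l2norm2 (fun x => f x - g x) x; rewrite ev lee_fin /=.
rewrite ef lee_fin in fle; rewrite eg lee_fin in gle.
by rewrite expr2 in mid; lra.
Qed.

Lemma cap_minimizer_unique h g : cap_minimizer h -> admissible E F g ->
  (l2norm2 g <= l2norm2 h)%E -> g =1 h.
Proof.
move=> [ha capN hfin] ga gh x; have [C eC] : exists C, l2norm2 h = C%:E.
  by move: (l2norm2_ge0 h) hfin; case: (l2norm2 h) => // C; exists C.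
have := @admissible_close C 0 0 g h x; rewrite capN eC !addr0 mulr0.
move=> /(_ erefl ga ha); rewrite -eC => /(_ gh (lexx _)) g_h.
by apply/eqP; rewrite -subr_eq0 -sqrf_eq0 eq_le g_h sqr_ge0.
Qed.

Lemma admissible_limit (f : nat -> vtx -> R) h :
  (forall n, admissible E F (f n)) -> (forall x, f n x @[n --> \oo] --> h x) ->
  admissible E F h.
Proof.
move=> fa fh; split => [z Fz|x hx].
  have cI : Iop (f n) z @[n --> \oo] --> Iop h z.
    by apply: cvg_big => [|i _]; [exact: add_continuous|exact: fh].
  by apply: (cvgr_to_ge cI); apply: nearW => n; exact: (fa n).1 z Fz.
apply: contrapT => nx; move/eqP: hx; apply.
suff f0 : (fun n => f n x) = fun=> 0 by rewrite -(cvg_lim _ (fh x)) // f0 lim_cst.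
apply/funext => n; apply: contrapT => /eqP fnx; exact/nx/((fa n).2 _ fnx).
Qed.

Lemma minimizing_seq_close (C : R) (f : nat -> vtx -> R) m n x :
  Cap E F = C%:E ->
  (forall n, admissible E F (f n) /\
             (l2norm2 (f n) <= (C + n.+1%:R^-1 ^+ 2)%:E)%E) ->
  (m <= n)%N -> `|f n x - f m x| <= 2 * m.+1%:R^-1.
Proof.
move=> capC fP mn; rewrite -ler_sqr ?nnegrE ?mulr_ge0 // real_normK ?num_real //.
apply: le_trans (admissible_close x capC (fP n).1 (fP m).1 (fP n).2 (fP m).2) _.
have := ler_natSinv R mn; have : 0 <= n.+1%:R^-1 :> R by rewrite invr_ge0.
rewrite exprMn; set u := n.+1%:R^-1; set v := m.+1%:R^-1; nra.
Qed.

Lemma exists_cap_minimizer : (Cap E F < +oo :> \bar R)%E -> exists h, cap_minimizer h.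
Proof.
move=> Cfin; have [C capC] : exists C : R, Cap E F = C%:E.
  by have := Cap_ge0; case: (Cap E F) Cfin => // C; exists C.
have /choice[f fP] : forall n, exists g : vtx -> R,
    admissible E F g /\ (l2norm2 g <= (C + n.+1%:R^-1 ^+ 2)%:E)%E.
  move=> n; have : (Cap E F < (C + n.+1%:R^-1 ^+ 2)%:E)%E.
    by rewrite capC lte_fin ltrDl exprn_gt0.
  by move/ereal_inf_lt => [_ [g ga <-] /ltW]; exists g.
pose h x := limn (fun n => f n x).
have fh x : f n x @[n --> \oo] --> h x.
  apply: (cvgn_of_cauchy_bound (fun m n => minimizing_seq_close x capC fP)).
  move=> e e0; have [M hM] := exists_natSinv_lt (divr_gt0 e0 (ltr0n R 2)).
  by exists M; rewrite mulrC -ltr_pdivlMr.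
have hC : (l2norm2 h <= C%:E)%E.
  apply: (l2norm2_cvg_le fh) => e e0; have [M hM] := exists_natSinv_lt e0.
  exists M => n Mn; apply: (le_trans (fP n).2); rewrite lee_fin lerD2l.
  have u0 : 0 <= n.+1%:R^-1 :> R by rewrite invr_ge0.
  have u1 : n.+1%:R^-1 <= 1 :> R by rewrite invf_le1 // ler1n.
  rewrite expr2 (le_trans (ler_piMr u0 u1)) //.
  exact: le_trans (ler_natSinv R Mn) (ltW hM).
have ha := admissible_limit (fun n => (fP n).1) fh.
exists h; split => //; last by rewrite (le_lt_trans hC) ?ltry.
by apply/le_anti; rewrite Cap_le_l2norm2 // capC hC.
Qed.
End CapMinimizer.

Section MinimizerProperties.
Variables (R : realType) (E F : set vtx) (h : vtx -> R).
Hypothesis hmin : cap_minimizer E F h.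

Let hadm : admissible E F h. Proof. by case: hmin. Qed.

Let hfin : exists C : R, l2norm2 h = C%:E.
Proof.
case: hmin => _ _; have := l2norm2_ge0 h.
by case: (l2norm2 h) => // C; exists C.
Qed.

Lemma minimizer_out_subtrees x : ~ subtrees E x -> h x = 0.
Proof. by move=> nx; have [//|/hadm.2/nx] := eqVneq (h x) 0. Qed.

Lemma minimizer_Iop_out x : ~ subtrees E x -> Iop h x = 0.
Proof.
move=> nx; rewrite -(Iop0 R x); apply: eq_Iop => y yx.
by apply: minimizer_out_subtrees => /subtrees_tle /(_ yx).
Qed.

Lemma minimizer_ge0 x : 0 <= h x.
Proof.
have ga : admissible E F (fun y => `|h y|).
  split => [z Fz|y]; last by rewrite normr_eq0 => /hadm.2.
  by apply: le_trans (hadm.1 z Fz) _; apply: ler_Iop => y; exact: ler_norm.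
have le : (l2norm2 (fun y => `|h y|%R) <= l2norm2 h)%E.
  by apply: le_l2norm2 => y; rewrite real_normK ?num_real.
by rewrite -(cap_minimizer_unique hmin ga le x).
Qed.

Lemma minimizer_Iop_le1 x : Iop h x <= 1.
Proof.
(* g y is the increment of min(Ih, 1) along the edge into y *)
pose g y := Num.min (Iop h y) 1 - Num.min (Iop h y - h y) 1.
have Ig y : Iop g y = Num.min (Iop h y) 1.
  elim: y => [|b y IH].
    by rewrite Iop_nil /g !Iop_nil subrr (@min_l _ _ 0) ?ler01 ?subr0.
  by rewrite Iop_cons IH /g Iop_cons (addrC (h _)) addrK subrK.
have g_bounds y : 0 <= g y <= h y.
  by have := min1_increment (Iop h y - h y) (minimizer_ge0 y); rewrite subrK.
have ga : admissible E F g.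
  split => [z Fz|y gy]; first by rewrite Ig le_min lexx andbT hadm.1.
  apply: hadm.2; apply: contraNneq gy => hy.
  by have /andP[g0 gh] := g_bounds y; rewrite eq_le g0 andbT -hy.
have le : (l2norm2 g <= l2norm2 h)%E.
  apply: le_l2norm2 => y; have /andP[g0 gh] := g_bounds y.
  by rewrite !expr2 ler_pM.
rewrite -(eq_Iop (fun y _ => cap_minimizer_unique hmin ga le y)) Ig.
by rewrite ge_min lexx orbT.
Qed.

Lemma minimizer_kirchhoff x : subtrees E x -> ~ F x ->
  h x = h (true :: x) + h (false :: x).
Proof.
move=> Ex nFx; set t := [:: x; true :: x; false :: x].
pose s := (h x - h (true :: x) - h (false :: x)) / 3.
pose d y := indicator R [:: true :: x] y + indicator R [:: false :: x] y
            - indicator R [:: x] y.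
pose g y := h y + s * d y.
have gx : g x = h x - s.
  rewrite /g /d /indicator !mem_seq1 eqxx !(eq_sym x).
  by rewrite !(negbTE (cons_neq _ _)) /=; ring.
have gc b : g (b :: x) = h (b :: x) + s.
  by case: b; rewrite /g /d /indicator !mem_seq1 eqxx (negbTE (cons_neq _ _)) /=; ring.
have hg y : y \notin t -> h y = g y.
  rewrite !inE !negb_or => /and3P[n1 n2 n3].
  rewrite /g /d /indicator !mem_seq1 (negbTE n1) (negbTE n2) (negbTE n3) /=.
  by rewrite addr0 subrr mulr0 addr0.
have ga : admissible E F g.
  split => [z Fz|y].
    have zx : z != x by apply/eqP => zx; apply: nFx; rewrite -zx.
    rewrite /g IopD IopZ /d IopD IopN IopD Iop_indicator_children //.
    by rewrite subrr mulr0 addr0 hadm.1.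
  have [|/hg <- /hadm.2 //] := boolP (y \in t).
  by rewrite !inE => /or3P[] /eqP -> _ //; exact: subtrees_tle Ex (tle_child _ _).
have [C eC] := hfin; have hC : (l2norm2 h <= C%:E)%E by rewrite eC.
have ut : uniq t by rewrite /= !inE !negb_or !(eq_sym x) !cons_neq.
(* shifting s from the edge into x to the two edges out of x changes the
   energy by -3 s^2 *)
have le : (l2norm2 g <= l2norm2 h)%E.
  rewrite eC (le_trans (l2norm2_update_le ut hg hC)) //.
  rewrite lee_fin !big_cons !big_nil gx !gc /s.
  by have := sqr_ge0 (h x - h (true :: x) - h (false :: x)); nra.
by have := cap_minimizer_unique hmin ga le x; rewrite gx /s; lra.
Qed.

Lemma minimizer_flow_seq (S : set vtx) s : stopping_time S -> uniq s ->
  (forall y, y \in s -> S y /\ subtrees E y) ->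
  ((\sum_(y <- s) h y)%:E <= l2norm2 h)%E.
Proof.
move=> st us sS; have [C eC] := hfin; rewrite eC lee_fin -subr_le0.
suff : 2 * (\sum_(y <- s) h y - C) <= 0 by lra.
(* compare h with the admissible competitor (1+t)h - t 1_s and let t -> 0 *)
apply: (le0_of_linear_perturbation
  (b := C + \sum_(y <- s) 1 - 2 * \sum_(y <- s) h y)) => t t0.
pose g y := (1 + t) * h y - t * indicator R s y.
have ga : admissible E F g.
  split => [z Fz|y].
    rewrite /g IopD IopN !IopZ; have := hadm.1 z Fz.
    have := @Iop_indicator_le1 R S s z st (fun y ys => (sS y ys).1); nra.
  have [/sS[]//|ys] := boolP (y \in s).
  by rewrite /g /indicator (negbTE ys) mulr0 subr0 mulf_eq0 negb_or => /andP[_ /hadm.2].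
have hg y : y \notin s -> (1 + t) * h y = g y.
  by move=> ys; rewrite /g /indicator (negbTE ys) mulr0 subr0.
have hC : (l2norm2 (fun y => (1 + t) * h y)%R <= ((1 + t) ^+ 2 * C)%:E)%E.
  by rewrite EFinM -eC l2norm2_scale.
have := le_trans (Cap_le_l2norm2 ga) (l2norm2_update_le us hg hC).
case: hmin => _ -> _; rewrite eC lee_fin.
have -> : \sum_(y <- s) g y ^+ 2 = \sum_(y <- s) ((1 + t) * h y) ^+ 2
    + t ^+ 2 * \sum_(y <- s) 1 - 2 * t * (1 + t) * \sum_(y <- s) h y.
  rewrite !mulr_sumr -big_split -sumrB big_seq [RHS]big_seq.
  by apply: eq_bigr => y ys; rewrite /g /indicator ys /=; ring.
by move=> le; rewrite -(ler_pM2l t0); nra.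
Qed.

Lemma minimizer_flow (S : set vtx) : stopping_time S ->
  (\esum_(k in S) (`|h k|)%:E <= l2norm2 h)%E.
Proof.
move=> st; apply: ge_ereal_sup => _ [X [finX XS] <-].
rewrite fsbig_finite // sumEFin; set s := finmap.enum_fset _.
have sX x : x \in s -> X x by move=> xs; rewrite -(fset_setK finX).
rewrite (bigID (fun y => `[< subtrees E y >])) /= [X in _ + X]big1 ?addr0; last first.
  by move=> y /asboolPn ny; rewrite minimizer_out_subtrees ?normr0.
rewrite -big_filter (eq_bigr h) => [|y _]; last by rewrite ger0_norm ?minimizer_ge0.
apply: (minimizer_flow_seq st); first exact/filter_uniq/finmap.fset_uniq.
by move=> y; rewrite mem_filter => /andP[/asboolP Ey /sX/XS].
Qed.

Hypothesis EF_disj : E `&` F = set0.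

Lemma minimizer_off_geod y : ~ geod_union E F y -> h y = 0.
Proof.
move=> nG; have [[e [Ee ey]]|/minimizer_out_subtrees//] := pselect (subtrees E y).
pose g w := if tle y w then 0 else h w.
have ga : admissible E F g.
  split => [z Fz|w]; last by rewrite /g; case: ifP => [_|_ /hadm.2//]; rewrite eqxx.
  rewrite (@eq_Iop _ g h) ?hadm.1 // => w wz; rewrite /g; case: ifP => // yw.
  exfalso; apply: nG; exists z, e; split => //; last exact: tle_trans yw wz.
  rewrite /tlt (tle_trans ey (tle_trans yw wz)) /=; apply/eqP => ez.
  have : (E `&` F) z by split => //; rewrite -ez.
  by rewrite EF_disj.
have le : (l2norm2 g <= l2norm2 h)%E.
  by apply: le_l2norm2 => w; rewrite /g; case: ifP; rewrite ?expr0n ?sqr_ge0.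
by rewrite -(cap_minimizer_unique hmin ga le y) /g tle_refl.
Qed.

Hypotheses (stE : stopping_time E) (stF : stopping_time F).

Lemma minimizer_zero_descends y w : subtrees E y -> h y = 0 -> tle y w ->
  (forall v, tle v w -> v != w -> ~ F v) -> h w = 0 /\ Iop h w = Iop h y.
Proof.
move=> Ey hy0; elim: w => [/tle_nil <- _|b w IH]; first by split.
rewrite tle_cons => /orP[/eqP <- //|yw] noF.
have [hw0 Iw] : h w = 0 /\ Iop h w = Iop h y.
  apply: IH => // v vw vnw; apply: noF (tle_trans vw (tle_child _ _)) _.
  by apply: contraTneq vw => ->; exact: tle_cons_neq.
have wnF : ~ F w by apply: noF (tle_child b w) _; rewrite eq_sym cons_neq.
have := minimizer_kirchhoff (subtrees_tle Ey yw) wnF.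
have := minimizer_ge0 (true :: w); have := minimizer_ge0 (false :: w).
rewrite hw0 Iop_cons -Iw => h1 h2 k.
have -> : h (b :: w) = 0 by case: (b); lra.
by split; rewrite ?add0r.
Qed.

(* Going up from q towards e, Kirchhoff's law at the parent keeps h = 0, since
   the sibling of q is off G(E,F) (below it Ih would exceed 1); at q = e,
   Ih e = h e = 0. *)
Lemma minimizer_zero_ascends e q : E e -> tle e q ->
  (forall p, tle p q -> p != q -> ~ F p) -> h q = 0 -> Iop h q != 1.
Proof.
move=> Ee; elim: q => [|b p IH] eq noF hq0.
  by rewrite Iop_nil hq0 eq_sym oner_eq0.
have [ebp|nebp] := eqVneq e (b :: p).
  rewrite Iop_cons hq0 add0r minimizer_Iop_out; first by rewrite eq_sym oner_eq0.
  apply: (stopping_time_not_subtrees stE Ee); rewrite ebp ?tle_child //.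
  by rewrite eq_sym cons_neq.
have ep : tle e p by move: eq; rewrite tle_cons (negbTE nebp).
have noFp v : tle v p -> v != p -> ~ F v.
  move=> vp _; apply: noF (tle_trans vp (tle_child _ _)) _.
  by apply: contraTneq vp => ->; exact: tle_cons_neq.
apply/negP => /eqP; rewrite Iop_cons hq0 add0r => Ip.
have sib0 : h (~~ b :: p) = 0.
  have [//|sib] := eqVneq (h (~~ b :: p)) 0.
  have : geod_union E F (~~ b :: p).
    by apply: contrapT => /minimizer_off_geod; apply/eqP.
  case=> z [_ [Fz _ _ _ sz]].
  have := Iop_tle_homo minimizer_ge0 sz; rewrite Iop_cons Ip.
  have := minimizer_Iop_le1 z; have := minimizer_ge0 (~~ b :: p).
  by rewrite le_eqVlt eq_sym (negbTE sib) /=; lra.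
have hp0 : h p = 0.
  have pnF : ~ F p by apply: noF (tle_child b p) _; rewrite eq_sym cons_neq.
  rewrite (minimizer_kirchhoff (ex_intro _ e (conj Ee ep)) pnF).
  by move: hq0 sib0; case: (b) => /= -> ->; rewrite ?addr0.
by move: (IH ep noFp hp0); rewrite Ip eqxx.
Qed.

Lemma minimizer_pos_geod y : geod_union E F y -> 0 < h y.
Proof.
move=> [z [e [Fz Ee _ ey yz]]]; rewrite lt_def minimizer_ge0 andbT.
apply/eqP => hy0; have Ey : subtrees E y by exists e.
have noF v : tle v z -> v != z -> ~ F v.
  by move=> vz vnz Fv; have [/negP] := stF Fv Fz vnz.
have noFy v : tle v y -> v != y -> ~ F v.
  move=> vy vny; apply: noF (tle_trans vy yz) _; apply: contraNneq vny => vz.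
  by rewrite vz in vy *; apply/eqP/tle_anti.
have Iz : Iop h z = 1 by apply/le_anti; rewrite minimizer_Iop_le1 hadm.1.
have [_ Iy] := minimizer_zero_descends Ey hy0 yz noF.
by move: (minimizer_zero_ascends Ee ey noFy hy0); rewrite -Iy Iz eqxx.
Qed.
End MinimizerProperties.

Lemma harmonic_Iop (R : realType) E F (h : vtx -> R) :
  (forall x, subtrees E x -> ~ F x -> h x = h (true :: x) + h (false :: x)) ->
  (forall x, ~ subtrees E x -> h x = 0) ->
  harmonic_in (~` (E `|` F)) (Iop h).
Proof.
move=> kirch out [|b x] [xo [Ox [_ [Op Om]]]]; first by rewrite eqxx in xo.
have split : h (b :: x) = h (true :: b :: x) + h (false :: b :: x).
  have [Ex|nEx] := pselect (subtrees E (b :: x)).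
    by apply: kirch => // Fx; apply: Ox; right.
  have nEc c : ~ subtrees E (c :: b :: x).
    case/subtrees_cons => // Ec; case: c Ec => Ec; [apply: Op|apply: Om]; by left.
  by rewrite !out ?addr0.
rewrite /parent /child_p /child_m /= !Iop_cons split; lra.
Qed.

Lemma Cap_below_finite (R : realType) F e :
  (Cap [set e] (below F e) < +oo :> \bar R)%E.
Proof.
have ia : admissible [set e] (below F e) (indicator R [:: e]).
  split => [z [_ ez]|x]; first by rewrite Iop_indicator1 ez.
  rewrite /indicator mem_seq1; have [->|] := eqVneq x e; last by rewrite eqxx.
  by exists e; split => //; exact: tle_refl.
by rewrite (le_lt_trans (Cap_le_l2norm2 ia)) // l2norm2_indicator1 ltry.
Qed.

Section GluedMinimizers.
Variables (R : realType) (E F : set vtx).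
Hypotheses (stE : stopping_time E) (stF : stopping_time F) (EF_disj : E `&` F = set0).

Lemma below_disj e : E e -> [set e] `&` below F e = set0.
Proof.
move=> Ee; apply/seteqP; split => // x [/= -> [Fe _]].
by have : (E `&` F) e by []; rewrite EF_disj.
Qed.

Lemma exists_glued_minimizers : exists h : vtx -> R,
  (forall x, ~ subtrees E x -> h x = 0) /\
  (forall e, E e -> exists g,
     cap_minimizer [set e] (below F e) g /\ forall w, tle e w -> h w = g w).
Proof.
have /choice[hf hfP] : forall e, exists g : vtx -> R,
    E e -> cap_minimizer [set e] (below F e) g.
  move=> e; have [g gmin] := exists_cap_minimizer (Cap_below_finite R F e).
  by exists g.
pose anc x := xget x [set e | E e /\ tle e x].
exists (fun x => if `[< subtrees E x >] then hf (anc x) x else 0).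
split => [x /asboolPn/negbTE -> //|e Ee].
exists (hf e); split => [|w ew]; first exact: hfP.
have Ew : subtrees E w by exists e.
have [Ea aw] : E (anc w) /\ tle (anc w) w by exact: xgetPex Ew.
by rewrite asboolT // (stopping_time_anc_uniq stE Ea Ee aw ew).
Qed.

Variable h : vtx -> R.
Hypothesis h_out : forall x, ~ subtrees E x -> h x = 0.
Hypothesis h_loc : forall e, E e -> exists g,
  cap_minimizer [set e] (below F e) g /\ forall w, tle e w -> h w = g w.

Lemma glued_eq_local e g z w : E e -> cap_minimizer [set e] (below F e) g ->
  (forall w, tle e w -> h w = g w) -> tle e z -> tle w z -> h w = g w.
Proof.
move=> Ee gmin hg ez wz; have [/hg//|new] := boolP (tle e w).
rewrite (minimizer_out_subtrees gmin); last by move=> [_ [/= -> ew]]; rewrite ew in new.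
apply: h_out => -[e' [Ee' e'w]].
by move: new; rewrite -(stopping_time_anc_uniq stE Ee' Ee (tle_trans e'w wz) ez) e'w.
Qed.

Lemma glued_admissible : succ_st F E -> admissible E F h.
Proof.
move=> FE; split => [z Fz|x hx]; last first.
  by apply: contrapT => /h_out hx0; rewrite hx0 eqxx in hx.
have [e [Ee /andP[ez _]]] := FE z Fz; have [g [gmin hg]] := h_loc Ee.
rewrite (eq_Iop (fun w => glued_eq_local Ee gmin hg ez)).
by case: gmin => -[+ _] _ _; apply; split.
Qed.

Lemma glued_kirchhoff x : subtrees E x -> ~ F x ->
  h x = h (true :: x) + h (false :: x).
Proof.
move=> [e [Ee ex]] nFx; have [g [gmin hg]] := h_loc Ee.
rewrite !hg ?(tle_trans ex (tle_child _ _)) //.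
by apply: (minimizer_kirchhoff gmin); [exists e|case].
Qed.

Lemma geod_union_below e y : E e -> tle e y ->
  geod_union E F y <-> geod_union [set e] (below F e) y.
Proof.
move=> Ee ey; split => [[z [e' [Fz Ee' e'z e'y yz]]]|[z [_ [[Fz _] /= -> ez ey' yz]]]].
  rewrite -(stopping_time_anc_uniq stE Ee' Ee e'y ey) in e'z *.
  by exists z, e'; split => //; split => //; case/andP: e'z.
by exists z, e.
Qed.

Lemma glued_pos_geod y : geod_union E F y -> 0 < h y.
Proof.
move=> Gy; have [z [e [_ Ee _ ey _]]] := Gy; have [g [gmin hg]] := h_loc Ee.
have stb : stopping_time (below F e) by apply: stopping_time_sub stF _ => ? [].
rewrite hg //; apply: (minimizer_pos_geod gmin (below_disj Ee) _ stb).
  exact: stopping_time_set1.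
by rewrite -geod_union_below.
Qed.

Lemma glued_off_geod y : ~ geod_union E F y -> h y = 0.
Proof.
move=> nG; have [[e [Ee ey]]|/h_out//] := pselect (subtrees E y).
have [g [gmin hg]] := h_loc Ee; rewrite hg //.
by apply: (minimizer_off_geod gmin (below_disj Ee)); rewrite -geod_union_below.
Qed.
End GluedMinimizers.

Theorem mainTheorem6 (R : realType) (E F : set vtx) :
  stopping_time E -> stopping_time F -> E `&` F = set0 -> succ_st F E ->
  exists h : vtx -> R,
    [/\ admissible E F h /\ Cap E F = l2norm2 h,
        harmonic_in (~` (E `|` F)) (Iop h),
        (forall S : set vtx, stopping_time S ->
           (\esum_(k in S) (`|h k|)%:E <= 2%:E * Cap E F)%E)
      & forall x, (geod_union E F x -> 0 < h x) /\
                  (~ geod_union E F x -> h x = 0)].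
Proof.
move=> stE stF disj FE.
have twice_Cap (c : \bar R) : (c <= Cap E F)%E -> (c <= 2%:E * Cap E F)%E.
  by move/le_trans; apply; rewrite lee_pemull ?Cap_ge0 // lee_fin ler1n.
have [Cfin|] := boolP (Cap E F < +oo :> \bar R)%E; last first.
  rewrite ltey negbK => /eqP Cinf.
  have [h [hout hloc]] := exists_glued_minimizers R F stE.
  have hadm := glued_admissible stE hout hloc FE.
  exists h; split.
  - split => //; apply/eqP; rewrite Cinf eq_sym -leye_eq -Cinf.
    exact: Cap_le_l2norm2.
  - exact: harmonic_Iop (glued_kirchhoff hloc) hout.
  - by move=> S _; apply: twice_Cap; rewrite Cinf leey.
  - move=> x; split; first exact: (glued_pos_geod stE stF disj hloc).
    exact: (glued_off_geod stE disj hout hloc).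
have [h hmin] := exists_cap_minimizer Cfin; exists h; split.
- by case: hmin.
- exact: harmonic_Iop (minimizer_kirchhoff hmin) (minimizer_out_subtrees hmin).
- move=> S st; apply: twice_Cap; have [_ -> _] := hmin.
  exact: (minimizer_flow hmin st).
- by move=> x; split; [exact: minimizer_pos_geod|exact: minimizer_off_geod].
Qed.
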